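(* Every distinguished variety in $\mathbb G_n$ is polynomially convex.
   Context: $\mathbb G_n=\pi_n(\mathbb D^n)$, $\Gamma_n=\pi_n(\overline{\mathbb D}^n)$, $b\Gamma_n=\pi_n(\mathbb T^n)$, where $\pi_n(z)=(e_1(z),\dots,e_{n-1}(z),z_1\cdots z_n)$ with $e_k$ the elementary symmetric polynomials. A distinguished variety in $\mathbb G_n$ is a set $\Lambda=V\cap\mathbb G_n$, $V$ the common zero set of some set of polynomials, such that $\overline{\Lambda}\cap\partial\Gamma_n=\overline{\Lambda}\cap b\Gamma_n$. *)

From HB Require Import structures.
From mathcomp Require Import all_boot all_order all_algebra.
From mathcomp Require Import all_classical all_reals all_analysis.
From mathcomp Require Import complex.
From mathcomp Require mpoly.
Import Order.TTheory GRing.Theory Num.Theory.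
Import numFieldTopology.Exports numFieldNormedType.Exports.

Set Implicit Arguments.
Unset Strict Implicit.
Unset Printing Implicit Defensive.

Local Open Scope ring_scope.
Local Open Scope classical_set_scope.

(* Topology of C = R[i]: the metric topology given by the complex modulus. *)
HB.instance Definition _ (R : rcfType) := PseudoPointedMetric.copy R[i] (R[i])^o.

Section Symmetrized.
Variables (R : realType) (n : nat).

Local Notation Cn := 'rV[R[i]]_n.

Definition esymf (k : nat) (z : Cn) : R[i] :=
  \sum_(S : {set 'I_n} | #|S| == k) \prod_(i in S) z ord0 i.

Definition pi_n (z : Cn) : Cn :=
  \row_(k < n) (if k.+1 == n then \prod_(i < n) z ord0 i else esymf k.+1 z).

Definition open_polydisc : set Cn := [set z | forall i, `|z ord0 i| < 1].
Definition closed_polydisc : set Cn := [set z | forall i, `|z ord0 i| <= 1].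
Definition torus_n : set Cn := [set z | forall i, `|z ord0 i| = 1].

Definition G_n : set Cn := pi_n @` open_polydisc.
Definition Gamma_n : set Cn := pi_n @` closed_polydisc.
Definition bGamma_n : set Cn := pi_n @` torus_n.

Definition tboundary (A : set Cn) : set Cn := closure A `\` interior A.

Definition peval (p : mpoly.mpoly n R[i]) (z : Cn) : R[i] :=
  mpoly.meval (fun i => z ord0 i) p.

Definition zero_set (S : set (mpoly.mpoly n R[i])) : set Cn :=
  [set z | forall p, S p -> peval p z = 0].

Definition distinguished_variety (L : set Cn) : Prop :=
  exists S : set (mpoly.mpoly n R[i]),
    L = zero_set S `&` G_n /\
    closure L `&` tboundary Gamma_n = closure L `&` bGamma_n.

Definition poly_hull (K : set Cn) : set Cn :=
  [set z | forall (p : mpoly.mpoly n R[i]) (M : R),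
     (forall w, K w -> `|peval p w| <= (M%:C)%C) -> `|peval p z| <= (M%:C)%C].

(* polynomial convexity of a (not necessarily compact) set X *)
Definition poly_convex (X : set Cn) : Prop :=
  forall K : set Cn, K `<=` X -> compact K -> poly_hull K `<=` X.

End Symmetrized.

From HB Require Import structures.
From mathcomp Require Import all_boot all_order all_algebra.
From mathcomp Require Import all_classical all_reals all_analysis.
From mathcomp Require Import complex.
From mathcomp Require mpoly.
Import numFieldTopology.Exports numFieldNormedType.Exports.
Local Open Scope ring_scope.
Local Open Scope classical_set_scope.
Import -(notations) mpoly.
From mathcomp Require Import zify lra.
Import Order.TTheory GRing.Theory Num.Theory.

(* Only the description L = V `&` G_n of a distinguished variety matters: the
   zero set V is trivially polynomially convex, and so is G_n.  For the latter,
   write z = pi_n mu; the coefficients A_m(z) of the power series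
   1 / \prod_i (1 - mu_i X) are polynomials in z.  A compact K inside G_n has
   all its mu_i in a disc of radius r < 1, so |A_m| <= D rho^m on K for any
   r < rho < 1, hence also on the polynomial hull of K.  As
   1 / (1 - mu_i X) = Q' / \prod_j (1 - mu_j X) with Q' a polynomial, this
   geometric decay forces |mu_i| < 1. *)

Set Implicit Arguments.
Unset Strict Implicit.

Section LinearFactors.
Variable F : comNzRingType.

Lemma coef0_1subZX (c : F) : (1 - c *: 'X)`_0 = 1.
Proof. by rewrite coefB coef1 coefZ coefX mulr0 subr0. Qed.

Lemma coef0_prod_1subZX (I : Type) (r : seq I) (P : pred I) (mu : I -> F) :
  (\prod_(i <- r | P i) (1 - mu i *: 'X))`_0 = 1.
Proof.
rewrite -horner_coef0 horner_prod; apply: big1 => i _.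
by rewrite hornerD hornerN hornerZ hornerX mulr0 subr0 hornerC.
Qed.

Lemma coef_prod_1subZX (cs : seq F) k :
  (\prod_(c <- cs) (1 - c *: 'X))`_k =
  if (k <= size cs)%N then (\prod_(c <- cs) ('X - c%:P))`_(size cs - k) else 0.
Proof.
elim: cs k => [|c cs IHcs] k; first by rewrite !big_nil !coef1; case: k.
rewrite !big_cons /=; set B := \prod_(c <- cs) ('X - c%:P).
have B_top : B`_(size cs).+1 = 0.
  by apply: nth_default; rewrite size_prod_XsubC.
rewrite mulrBl mul1r coefB -scalerAl coefZ coefXM.
case: k => [|k].
  rewrite eqxx mulr0 subr0 IHcs leq0n !subn0.
  by rewrite mulrBl coefB coefXM /= mul_polyC coefZ B_top mulr0 subr0.
rewrite /= !IHcs ltnS; case: (ltngtP k (size cs)) => [lt_k|gt_k|->].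
- rewrite mulrBl coefB coefXM mul_polyC coefZ subSS.
  have -> : (size cs - k == 0)%N = false by rewrite subn_eq0 leqNgt lt_k.
  by rewrite subnS.
- by rewrite mulr0 subr0.
- by rewrite subSS subnn mulrBl coefB coefXM mul_polyC coefZ /= !sub0r.
Qed.

End LinearFactors.

Section TruncatedInverse.
Variable F : comNzRingType.
Implicit Types (A B Q : {poly F}) (m : nat).

Definition eq_upto m A B := forall k, (k <= m)%N -> A`_k = B`_k.

Lemma eq_uptoM m A A' B B' :
  eq_upto m A A' -> eq_upto m B B' -> eq_upto m (A * B) (A' * B').
Proof.
move=> eqA eqB k le_km; rewrite !coefM; apply: eq_bigr => i _.
rewrite eqA ?eqB //; first exact: leq_trans (leq_subr _ _) le_km.
exact: leq_trans (ltnSE (ltn_ord i)) le_km.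
Qed.

Lemma eq_upto_sym m A B : eq_upto m A B -> eq_upto m B A.
Proof. by move=> eqAB k le_km; rewrite eqAB. Qed.

Lemma eq_upto_le m m' A B : (m' <= m)%N -> eq_upto m A B -> eq_upto m' A B.
Proof. by move=> le_m'm eqAB k le_km'; apply: eqAB; exact: leq_trans le_m'm. Qed.

(* For Q`_0 = 1, 1 - Q is divisible by 'X, so this partial geometric series
   inverts Q up to degree m: inv_coef Q m is the m-th coefficient of the power
   series 1 / Q. *)
Definition inv_approx Q m := \sum_(j < m.+1) (1 - Q) ^+ j.

Definition inv_coef Q m := (inv_approx Q m)`_m.

Lemma coef_expr_1sub_lt Q j k : Q`_0 = 1 -> (k < j)%N -> ((1 - Q) ^+ j)`_k = 0.
Proof.
move=> Q0; elim: j k => [|j IHj] k //= lt_kj.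
rewrite exprS coefM big_ord_recl /= subn0 coefB coef1 Q0 subrr mul0r add0r.
apply: big1 => i _; rewrite IHj ?mulr0 //.
by rewrite /bump /= add1n subnSK //; rewrite -ltnS (leq_ltn_trans (leq_subr _ _)).
Qed.

Lemma mul_inv_approx Q m : Q`_0 = 1 -> eq_upto m (Q * inv_approx Q m) 1.
Proof.
move=> Q0; have -> : Q * inv_approx Q m = 1 - (1 - Q) ^+ m.+1.
  apply: oppr_inj; rewrite opprB (subrX1 (1 - Q) m.+1).
  by rewrite addrAC subrr add0r mulNr.
by move=> k le_km; rewrite coefB coef_expr_1sub_lt // subr0.
Qed.

Lemma inv_coef_unique Q B m : Q`_0 = 1 -> eq_upto m (Q * B) 1 ->
  forall k, (k <= m)%N -> B`_k = inv_coef Q k.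
Proof.
move=> Q0 QB1 k le_km.
have eqB : eq_upto k (B * 1) (B * (Q * inv_approx Q k)).
  by apply: eq_uptoM => //; apply: eq_upto_sym; exact: mul_inv_approx.
have eqQB : eq_upto k ((Q * B) * inv_approx Q k) (1 * inv_approx Q k).
  by apply: eq_uptoM => //; exact: eq_upto_le le_km QB1.
by rewrite /inv_coef -[B]mulr1 eqB // mulrCA mulrA eqQB // mul1r.
Qed.

Lemma coef_inv_approx Q m k :
  Q`_0 = 1 -> (k <= m)%N -> (inv_approx Q m)`_k = inv_coef Q k.
Proof. by move=> Q0; apply: inv_coef_unique => //; exact: mul_inv_approx. Qed.

Lemma inv_coefM Q1 Q2 m : Q1`_0 = 1 -> Q2`_0 = 1 ->
  inv_coef (Q1 * Q2) m = \sum_(j < m.+1) inv_coef Q1 j * inv_coef Q2 (m - j).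
Proof.
move=> Q10 Q20.
have Q120 : (Q1 * Q2)`_0 = 1 by rewrite coefM big_ord1 Q10 Q20 mulr1.
rewrite -(@inv_coef_unique _ (inv_approx Q1 m * inv_approx Q2 m) m) //; last first.
  by rewrite mulrACA -[1](mulr1 1); apply: eq_uptoM; exact: mul_inv_approx.
rewrite coefM; apply: eq_bigr => j _; rewrite !coef_inv_approx //.
  exact: leq_subr.
exact: ltnSE (ltn_ord j).
Qed.

Lemma inv_coef_1subZX (c : F) m : inv_coef (1 - c *: 'X) m = c ^+ m.
Proof.
rewrite /inv_coef /inv_approx opprB addrC subrK coef_sum.
rewrite (bigD1 ord_max) //= exprZn coefZ coefXn eqxx mulr1 big1 ?addr0 //.
move=> i ne_im; rewrite exprZn coefZ coefXn.
suff -> : (m == i) = false by rewrite mulr0.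
by apply/negbTE; apply: contra ne_im => /eqP e; apply/eqP/val_inj; rewrite /= -e.
Qed.

Lemma inv_coef1 m : inv_coef 1 m = (m == 0)%:R.
Proof.
rewrite /inv_coef /inv_approx subrr big_ord_recl expr0 big1 ?addr0 ?coef1 //.
by move=> i _; rewrite expr0n.
Qed.

End TruncatedInverse.

Section NormBounds.
Variable F : numFieldType.

Lemma sum_exprM_le (r rho : F) m : 0 <= r -> r < rho ->
  \sum_(j < m.+1) r ^+ j * rho ^+ (m - j) <= rho ^+ m.+1 / (rho - r).
Proof.
move=> r_ge0 lt_r_rho; rewrite ler_pdivlMr ?subr_gt0 //.
rewrite (eq_bigr (fun j : 'I_m.+1 => rho ^+ (m - j) * r ^+ j)); last first.
  by move=> j _; exact: mulrC.
by rewrite mulrC -subrXX lerBlDr lerDl exprn_ge0.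
Qed.

Lemma norm_inv_coef_prod_le k (mu : 'I_k -> F) (r rho : F) :
  0 <= r -> r < rho -> (forall i, `|mu i| <= r) ->
  forall m, `|inv_coef (\prod_(i < k) (1 - mu i *: 'X)) m|
              <= (rho / (rho - r)) ^+ k * rho ^+ m.
Proof.
move=> r_ge0 lt_r_rho; have rho_gt0 : 0 < rho by apply: le_lt_trans lt_r_rho.
elim: k mu => [|k IHk] mu mu_le m.
  rewrite big_ord0 inv_coef1 expr0 mul1r.
  by case: m => [|m] /=; rewrite ?normr1 ?expr0 // normr0 exprn_ge0 // ltW.
rewrite big_ord_recr /= mulrC inv_coefM ?coef0_1subZX ?coef0_prod_1subZX //.
apply: (le_trans (ler_norm_sum _ _ _)).
apply: (@le_trans _ _ (\sum_(j < m.+1)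
                        (rho / (rho - r)) ^+ k * (r ^+ j * rho ^+ (m - j)))).
  apply: ler_sum => j _; rewrite normrM inv_coef_1subZX normrX mulrCA.
  apply: ler_pM; rewrite ?exprn_ge0 //.
    by apply: lerXn2r; rewrite ?nnegrE ?normr_ge0 // mu_le.
  exact: (IHk (fun i => mu (widen_ord (leqnSn k) i))).
rewrite -mulr_sumr exprS -mulrA mulrCA ler_pM2l ?exprn_gt0 ?divr_gt0 ?subr_gt0 //.
apply: (le_trans (sum_exprM_le m r_ge0 lt_r_rho)).
by rewrite exprS mulrAC mulrC.
Qed.

Lemma norm_prod_1sub_ge k (a : 'I_k -> F) (c : F) :
  0 <= c -> (forall j, `|a j| <= 1 - c) -> c ^+ k <= `|\prod_(j < k) (1 - a j)|.
Proof.
move=> c_ge0 a_le; rewrite normr_prod -[k in c ^+ k]card_ord -prodr_const.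
apply: ler_prod => j _; rewrite c_ge0 /=.
apply: le_trans (lerB_normD _ _); rewrite normr1 normrN lerBrDl addrC -lerBrDl.
exact: a_le.
Qed.

(* 1 / (1 - lam i0 X) is (1 / Q) times the polynomial cofactor Q', so the
   coefficients lam i0 ^+ m are controlled by those of 1 / Q. *)
Lemma root_expr_le_of_inv_coef_decay k (lam : 'I_k -> F) i0 (D rho : F) :
  0 <= rho <= 1 ->
  (forall m, `|inv_coef (\prod_(i < k) (1 - lam i *: 'X)) m| <= D * rho ^+ m) ->
  exists (W : F) (s : nat), forall N, `|lam i0| ^+ (N + s) <= W * rho ^+ N.
Proof.
move=> /andP [rho_ge0 rho_le1] decay.
have D_ge0 : 0 <= D by have := decay 0%N; rewrite expr0 mulr1; apply: le_trans.
pose Q := \prod_(i < k) (1 - lam i *: 'X).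
pose Q' := \prod_(i < k | i != i0) (1 - lam i *: 'X).
have Q0 : Q`_0 = 1 by rewrite coef0_prod_1subZX.
have QE : Q = (1 - lam i0 *: 'X) * Q' by rewrite /Q (bigD1 i0).
pose s := size Q'; exists ((\sum_(j < s) `|Q'`_j|) * D), s => N.
pose m := (N + s)%N.
have lamE : lam i0 ^+ m = (Q' * inv_approx Q m)`_m.
  rewrite -inv_coef_1subZX; symmetry; apply: (inv_coef_unique (coef0_1subZX _)).
    by rewrite mulrA -QE; apply: mul_inv_approx.
  exact: leqnn.
have Q'E : Q' = \sum_(j < s) Q'`_j *: 'X^j by rewrite -poly_def coefK.
rewrite -normrX lamE {1}Q'E mulr_suml coef_sum.
apply: (le_trans (ler_norm_sum _ _ _)).
rewrite -mulrA mulr_suml; apply: ler_sum => j _.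
have le_jm : (j <= m)%N by rewrite (leq_trans (ltnW (ltn_ord j))) // leq_addl.
rewrite -scalerAl coefZ coefXnM ltnNge le_jm /= normrM ler_wpM2l //.
rewrite (coef_inv_approx Q0 (leq_subr j m)).
apply: (le_trans (decay _)); rewrite ler_wpM2l // ler_wiXn2l //.
by rewrite /m -addnBA ?leq_addr // ltnW.
Qed.

End NormBounds.

Section RootPolynomials.
Variables (R : realType) (n : nat).
Local Notation C := R[i].
Local Notation Cn := 'rV[C]_n.

Lemma esymf_meval k (z : Cn) :
  esymf k z = meval (fun i => z ord0 i) (mesym n C k).
Proof.
rewrite /esymf /mesym raddf_sum /=; apply: eq_bigr => S _.
by rewrite rmorph_prod /=; apply: eq_bigr => i _; rewrite mevalXU.
Qed.

Lemma esymf0 (z : Cn) : esymf 0 z = 1.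
Proof. by rewrite esymf_meval mesym0E rmorph1. Qed.

Lemma pi_n_coord (z : Cn) (k : 'I_n) : pi_n z ord0 k = esymf k.+1 z.
Proof.
rewrite /pi_n mxE; case: eqP => // kSn.
rewrite esymf_meval kSn mesymnnE rmorph_prod /=.
by apply: eq_bigr => i _; rewrite mevalXU.
Qed.

Lemma coef_prod_1subZX_esymf (mu : Cn) k :
  (\prod_(i < n) (1 - mu ord0 i *: 'X))`_k =
  if (k <= n)%N then (-1) ^+ k * esymf k mu else 0.
Proof.
pose cs := [tuple mu ord0 i | i < n].
have -> : \prod_(i < n) (1 - mu ord0 i *: 'X) = \prod_(c <- cs) (1 - c *: 'X).
  by rewrite big_tuple; apply: eq_bigr => i _; rewrite tnth_mktuple.
rewrite coef_prod_1subZX size_tuple; case: leqP => // le_kn.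
rewrite (mroots_coeff cs (Ordinal (le_kn : (k < n.+1)%N))) esymf_meval.
by congr (_ * _); apply: meval_eq => i; rewrite tnth_mktuple.
Qed.

Definition rev_root_poly (z : Cn) : {poly C} :=
  1 + \sum_(k < n) ((-1) ^+ k.+1 * z ord0 k) *: 'X^(k.+1).

Lemma coef0_rev_root_poly z : (rev_root_poly z)`_0 = 1.
Proof.
rewrite coefD coef1 coef_sum big1 ?addr0 // => k _.
by rewrite coefZ coefXn mulr0.
Qed.

Lemma coefS_rev_root_poly z (k : 'I_n) :
  (rev_root_poly z)`_k.+1 = (-1) ^+ k.+1 * z ord0 k.
Proof.
rewrite coefD coef1 add0r coef_sum (bigD1 k) //= coefZ coefXn eqxx mulr1.
rewrite big1 ?addr0 // => j ne_jk; rewrite coefZ coefXn eqSS.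
suff -> : (k == j :> nat) = false by rewrite mulr0.
by apply/negbTE; apply: contra ne_jk => /eqP e; apply/eqP/val_inj; rewrite /= e.
Qed.

Lemma coef_rev_root_poly_gt z j : (n < j)%N -> (rev_root_poly z)`_j = 0.
Proof.
move=> lt_nj; rewrite coefD coef1 coef_sum.
have -> : (j == 0%N) = false by case: j lt_nj.
rewrite add0r big1 // => k _; rewrite coefZ coefXn.
suff -> : (j == k.+1) = false by rewrite mulr0.
by apply/negbTE; move: (ltn_ord k) lt_nj; lia.
Qed.

Lemma rev_root_poly_inj : injective rev_root_poly.
Proof.
move=> z w eq_zw; apply/rowP => k.
have := congr1 (fun p : {poly C} => p`_k.+1) eq_zw.
by rewrite /= !coefS_rev_root_poly => /(mulrI (unitrX _ (unitrN1 _))).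
Qed.

Lemma rev_root_poly_pi_n (mu : Cn) :
  rev_root_poly (pi_n mu) = \prod_(i < n) (1 - mu ord0 i *: 'X).
Proof.
apply/polyP => j; rewrite coef_prod_1subZX_esymf; case: j => [|j].
  by rewrite coef0_rev_root_poly expr0 mul1r esymf0.
case: (ltnP j n) => lt_jn.
  by rewrite (coefS_rev_root_poly _ (Ordinal lt_jn)) pi_n_coord.
by rewrite coef_rev_root_poly_gt.
Qed.

Lemma root_rev_root_poly_pi_n (mu : Cn) i :
  mu ord0 i != 0 -> root (rev_root_poly (pi_n mu)) (mu ord0 i)^-1.
Proof.
move=> mu_i_neq0; rewrite rev_root_poly_pi_n /root horner_prod.
rewrite (bigD1 i) //= hornerD hornerN hornerZ hornerX hornerC.
by rewrite mulfV // subrr mul0r.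
Qed.

Lemma norm_horner_rev_root_poly_sub_le (z w : Cn) (x b d : C) :
  1 <= b -> `|x| <= b -> (forall k, `|z ord0 k - w ord0 k| <= d) ->
  `|(rev_root_poly z).[x] - (rev_root_poly w).[x]| <= n%:R * b ^+ n * d.
Proof.
move=> b_ge1 x_le_b zw_le_d.
rewrite !hornerD !horner_sum opprD addrACA subrr add0r -sumrB.
apply: (le_trans (ler_norm_sum _ _ _)).
rewrite -mulrA mulr_natl -[n in _ *+ n]card_ord -sumr_const.
apply: ler_sum => k _.
rewrite !hornerZ hornerXn -mulrBl -mulrBr !normrM normrX normrN1 expr1n mul1r.
rewrite mulrC ler_pM // normrX (le_trans (lerXn2r _ _ _ x_le_b)) ?nnegrE //.
  exact: le_trans ler01 b_ge1.
exact: ler_weXn2l.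
Qed.

(* Splitting this monic polynomial provides a preimage of z under pi_n. *)
Definition root_poly (z : Cn) : {poly C} :=
  \poly_(j < n.+1) (rev_root_poly z)`_(n - j).

Lemma size_root_poly z : size (root_poly z) = n.+1.
Proof. by rewrite size_poly_eq //= subnn coef0_rev_root_poly oner_neq0. Qed.

Lemma root_poly_monic z : root_poly z \is monic.
Proof.
rewrite monicE /lead_coef size_root_poly coef_poly ltnSn subnn.
exact/eqP/coef0_rev_root_poly.
Qed.

Lemma pi_n_surj (z : Cn) : exists mu : Cn, z = pi_n mu.
Proof.
have [rs rsE] := closed_field_poly_normal (root_poly z).
rewrite (eqP (root_poly_monic z)) scale1r in rsE.
have size_rs : size rs = n.
  by have := size_root_poly z; rewrite rsE size_prod_XsubC => -[].
exists (\row_(i < n) rs`_i); apply: rev_root_poly_inj.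
rewrite rev_root_poly_pi_n.
have -> : \prod_(i < n) (1 - (\row_(i < n) rs`_i) ord0 i *: 'X)
          = \prod_(c <- rs) (1 - c *: 'X).
  by rewrite (big_nth 0) big_mkord size_rs; apply: eq_bigr => i _; rewrite mxE.
apply/polyP => j; rewrite coef_prod_1subZX size_rs -rsE coef_poly.
case: (leqP j n) => [le_jn|lt_nj]; last exact: coef_rev_root_poly_gt.
by rewrite ltnS leq_subr subKn.
Qed.

Definition rev_root_mpoly : {poly mpoly.mpoly n C} :=
  1 + \sum_(k < n) ((-1) ^+ k.+1 * mpolyX C (mnm1 k)) *: 'X^(k.+1).

Lemma peval_inv_coef_rev_root_mpoly m z :
  peval (inv_coef rev_root_mpoly m) z = inv_coef (rev_root_poly z) m.
Proof.
pose f := meval (fun i => z ord0 i).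
have fQ : map_poly f rev_root_mpoly = rev_root_poly z.
  rewrite rmorphD rmorph1 rmorph_sum /=; congr (_ + _); apply: eq_bigr => k _.
  rewrite map_polyZ map_polyXn /= rmorphM rmorphXn rmorphN1.
  by congr ((_ * _) *: _); apply: mevalXU.
have fS : map_poly f (inv_approx rev_root_mpoly m)
          = inv_approx (rev_root_poly z) m.
  rewrite /inv_approx rmorph_sum; apply: eq_bigr => j _.
  by rewrite rmorphXn rmorphB rmorph1 -fQ.
by rewrite /peval /inv_coef -fS coef_map.
Qed.

End RootPolynomials.

Arguments rev_root_mpoly {R n}.

Lemma exists_mul_expr_lt1 (R : archiRealFieldType) (W rho : R) :
  `|rho| < 1 -> exists N, W * rho ^+ N < 1.
Proof.
move=> rho_lt1.
have := cvgMl_tmp (FF := eventually_filter) (a := W) (cvg_expr rho_lt1).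
rewrite mulr0 => cvg0; have [N _ ltN] := cvgr_lt _ cvg0 _ ltr01.
by exists N; apply: ltN => /=.
Qed.

Lemma exists_bound_lt1 (R : realFieldType) (s : seq R) :
  all (fun x => x < 1) s ->
  exists r : R, [/\ 0 <= r, r < 1 & forall x, x \in s -> x <= r].
Proof.
elim: s => [|a s IHs] /=; first by exists 0; split => //; lra.
move=> /andP [a_lt1 /IHs [r [r_ge0 r_lt1 r_ub]]].
exists (Num.max r a); split; first by rewrite le_max r_ge0.
  by rewrite gt_max r_lt1 a_lt1.
move=> x; rewrite inE le_max => /orP [/eqP ->|/r_ub ->]; last by [].
by rewrite lexx orbT.
Qed.

Section SymmetrizedPolydisc.
Variables (R : realType) (n : nat).
Local Notation C := R[i].
Local Notation Cn := 'rV[C]_n.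
Local Notation "x %:C" := (real_complex R x) (at level 1, format "x %:C").

Lemma normC_Re (x : C) : `|x| = (complex.Re `|x|)%:C.
Proof. by rewrite RRe_real // normr_real. Qed.

Lemma not_forall_ge1_mul_expr (W : C) (rho : R) :
  0 <= rho < 1 -> ~ (forall N, 1 <= W * rho%:C ^+ N).
Proof.
move=> /andP [rho_ge0 rho_lt1] ge1.
have W_ge1 : 1 <= W by have := ge1 0%N; rewrite expr0 mulr1.
have WE : W = (complex.Re W)%:C.
  by rewrite RRe_real // ger0_real // (le_trans ler01 W_ge1).
have [N ltN] : exists N, complex.Re W * rho ^+ N < 1.
  by apply: exists_mul_expr_lt1; rewrite ger0_norm.
have := ge1 N; rewrite WE -rmorphXn -rmorphM -(rmorph1 (real_complex R)) lecR.
by rewrite leNgt ltN.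
Qed.

Lemma roots_lt1_of_inv_coef_decay (lam : Cn) (D rho : R) : 0 <= rho < 1 ->
  (forall m, `|inv_coef (\prod_(i < n) (1 - lam ord0 i *: 'X)) m|
               <= (D * rho ^+ m)%:C) ->
  forall i, `|lam ord0 i| < 1.
Proof.
move=> /andP [rho_ge0 rho_lt1] decay i; rewrite real_ltNge ?normr_real ?real1 //.
apply/negP => lam_i_ge1.
have rhoC_bounds : 0 <= rho%:C <= 1.
  by rewrite -(rmorph1 (real_complex R)) !lecR rho_ge0 ltW.
have decayC m : `|inv_coef (\prod_(j < n) (1 - lam ord0 j *: 'X)) m|
                <= D%:C * rho%:C ^+ m.
  by rewrite -rmorphXn -rmorphM; exact: decay.
have [W [s le_W]] := root_expr_le_of_inv_coef_decay i rhoC_bounds decayC.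
apply: (@not_forall_ge1_mul_expr W rho); first by rewrite rho_ge0.
move=> N; apply: le_trans (le_W N); first exact: exprn_ege1.
Qed.

Lemma open_polydisc_bounded (mu : Cn) : open_polydisc mu ->
  exists r : R, [/\ 0 <= r, r < 1 & forall j, `|mu ord0 j| <= r%:C].
Proof.
move=> mu_in; have [|r [r_ge0 r_lt1 r_ub]] :=
    @exists_bound_lt1 _ [seq complex.Re `|mu ord0 j| | j <- enum 'I_n].
  by apply/allP => _ /mapP [j _ ->]; rewrite -ltcR -normC_Re; exact: mu_in.
exists r; split => // j; rewrite normC_Re lecR; apply: r_ub.
by apply/mapP; exists j; rewrite ?mem_enum.
Qed.

(* If a root mu_i of z = pi_n mu had modulus >= r, then x = mu_i^-1 would be a
   root of rev_root_poly z in the disc of radius 2, whereas rev_root_poly w0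
   stays >= c^n in modulus there and differs from rev_root_poly z by at most
   n 2^n d < c^n. *)
Lemma pi_n_roots_locally_bounded (w0 : Cn) : G_n w0 ->
  exists2 r : R, r < 1 & exists2 d : C, 0 < d & forall mu : Cn,
    (forall k, `|w0 ord0 k - pi_n mu ord0 k| < d) ->
    forall i, `|mu ord0 i| < r%:C.
Proof.
case=> mu0 mu0_in <-.
have [r0 [r0_ge0 r0_lt1 r0_ub]] := open_polydisc_bounded mu0_in.
pose r : R := (1 + r0) / 2.
have r_gt0 : 0 < r by rewrite /r; lra.
have r0_lt_r : r0 < r by rewrite /r; lra.
have r_gt0C : 0 < r%:C by rewrite ltcR.
have invr_le2 : (r%:C)^-1 <= 2.
  rewrite -fmorphV -[2]/(2%:R) -(rmorph_nat (real_complex R)) lecR.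
  by rewrite -[r^-1]mul1r ler_pdivrMr // /r; lra.
pose c : C := 1 - r0%:C / r%:C.
have c_gt0 : 0 < c by rewrite subr_gt0 ltr_pdivrMr // mul1r ltcR.
have denom_gt0 : 0 < n%:R * 2 ^+ n + 1 :> C.
  by rewrite ltr_wpDl ?ltr01 ?mulr_ge0 ?exprn_ge0.
pose d : C := c ^+ n / (n%:R * 2 ^+ n + 1).
have nd_lt : n%:R * 2 ^+ n * d < c ^+ n.
  rewrite /d mulrCA -[X in _ < X]mulr1 ltr_pM2l ?exprn_gt0 //.
  by rewrite ltr_pdivrMr ?mul1r ?ltrDl ?ltr01.
exists r; first by rewrite /r; lra.
exists d; first by rewrite divr_gt0 ?exprn_gt0.
move=> mu near_mu i; rewrite normC_Re ltcR real_ltNge ?num_real //.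
apply/negP; rewrite -lecR -normC_Re => r_le_mu.
have mu_i_neq0 : mu ord0 i != 0 by rewrite -normr_gt0 (lt_le_trans r_gt0C).
pose x := (mu ord0 i)^-1.
have x_le : `|x| <= (r%:C)^-1 by rewrite normfV lef_pV2 ?posrE ?normr_gt0.
have x_le2 : `|x| <= 2 := le_trans x_le invr_le2.
have c_le : c ^+ n <= `|(rev_root_poly (pi_n mu0)).[x]|.
  rewrite rev_root_poly_pi_n horner_prod.
  under eq_bigr => j _ do rewrite hornerD hornerN hornerZ hornerX hornerC.
  apply: norm_prod_1sub_ge; first exact: ltW.
  by move=> j; rewrite opprB addrC subrK normrM ler_pM.
have := norm_horner_rev_root_poly_sub_le (ler1n _ 2) x_le2
  (fun k => ltW (near_mu k)).
rewrite (rootP (root_rev_root_poly_pi_n mu_i_neq0)) subr0 => le_nd.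
by have := le_lt_trans (le_trans c_le le_nd) nd_lt; rewrite ltxx.
Qed.

Lemma compact_G_n_roots_bounded (K : set Cn) :
  compact K -> K `<=` @G_n R n ->
  exists r : R, [/\ 0 <= r, r < 1 &
    forall mu : Cn, K (pi_n mu) -> forall i, `|mu ord0 i| < r%:C].
Proof.
move=> cK KG.
have local_bound w : exists p : R * C, G_n w ->
    [/\ p.1 < 1, 0 < p.2 & forall mu : Cn,
      (forall k, `|w ord0 k - pi_n mu ord0 k| < p.2) ->
      forall i, `|mu ord0 i| < p.1%:C].
  have [Gw|] := pselect (G_n w); last by exists (0, 0).
  have [r r_lt1 [d d_gt0 r_bound]] := pi_n_roots_locally_bounded Gw.
  by exists (r, d).
have [f f_spec] := choice local_bound.
have memK w : w \in K -> K w by rewrite in_setE.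
rewrite compact_cover in cK.
have K_cover : K `<=` cover K (fun w => interior (ball w (f w).2)).
  move=> w Kw; have [_ d_gt0 _] := f_spec w (KG w Kw).
  by exists w => //; exact: nbhsx_ballx.
have [D D_sub D_cover] := cK Cn K _ (fun _ _ => open_interior _) K_cover.
have [|r [r_ge0 r_lt1 r_ub]] :=
    @exists_bound_lt1 _ [seq (f w).1 | w <- finmap.enum_fset D].
  apply/allP => _ /mapP [w /D_sub/memK Kw ->].
  by have [] := f_spec w (KG w Kw).
exists r; split => // mu Kmu i.
have [w wD /interior_subset w_near] := D_cover _ Kmu.
have [_ _ w_bound] := f_spec w (KG w (memK _ (D_sub _ wD))).
apply: (lt_le_trans (w_bound mu _ i)); first by move=> k; case: w_near => _; exact.
by rewrite lecR; apply: r_ub; apply/mapP; exists w.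
Qed.

Lemma poly_hull_zero_set (S : set (mpoly.mpoly n C)) (K : set Cn) :
  K `<=` zero_set S -> poly_hull K `<=` zero_set S.
Proof.
move=> K_sub z z_hull p Sp.
apply/eqP; rewrite -normr_le0 -(rmorph0 (real_complex R)).
by apply: z_hull => w Kw; rewrite (K_sub w Kw p Sp) normr0 rmorph0.
Qed.

Lemma poly_hull_G_n (K : set Cn) :
  compact K -> K `<=` @G_n R n -> poly_hull K `<=` @G_n R n.
Proof.
move=> cK KG z z_hull.
have [r [r_ge0 r_lt1 r_bound]] := compact_G_n_roots_bounded cK KG.
pose rho : R := (1 + r) / 2.
have decay m : `|peval (inv_coef rev_root_mpoly m) z|
               <= ((rho / (rho - r)) ^+ n * rho ^+ m)%:C.
  apply: z_hull => w Kw; have [mu _ muE] := KG w Kw.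
  rewrite peval_inv_coef_rev_root_mpoly -muE rev_root_poly_pi_n.
  rewrite rmorphM !rmorphXn /= fmorph_div rmorphB /=.
  apply: norm_inv_coef_prod_le; first by rewrite lecR.
    by rewrite ltcR /rho; lra.
  by move=> i; apply/ltW/r_bound; rewrite muE.
have [lam zE] := pi_n_surj z; exists lam => //.
apply: (roots_lt1_of_inv_coef_decay (rho := rho)).
  by apply/andP; split; rewrite /rho; lra.
by move=> m; rewrite -rev_root_poly_pi_n -zE -peval_inv_coef_rev_root_mpoly.
Qed.

End SymmetrizedPolydisc.

Theorem mainTheorem5 (R : realType) (n : nat) (L : set 'rV[R[i]]_n) :
  distinguished_variety L -> poly_convex L.
Proof.
move=> [S [-> _]] K K_sub cK z z_hull; split.
  by apply: (poly_hull_zero_set (K := K)) => // w /K_sub [].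
by apply: (poly_hull_G_n cK) => // w /K_sub [].
Qed.
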